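(* Let $\mathcal L$ be a finite distributive lattice, let $\mathbb F$ be the minimal multigraded free resolution of $H_{\mathcal L}$ and $\widetilde{\mathbb F}$ the minimal multigraded free resolution of $H_{\widetilde{\mathcal L}}$, both in the explicit form described in the context. Then the $S$-linear map $\pi:\sigma(\widetilde{\mathbb F})\to\mathbb F$ given by $\pi(\sigma(\widetilde b(r;T)))=(-1)^{|T|}\,b(r^T;T_r)$ is an isomorphism of complexes.
   Context: Let $P$ be the set of join-irreducible elements of $\mathcal L$ (elements with exactly one lower neighbor); for $p\in\mathcal L$ put $\ell(p)=\{q\in P:q\le p\}$. Let $K$ be a field, $S=K[x_p,y_p:p\in P]$, $u_q=\prod_{p\in\ell(q)}x_p\prod_{p\in P\setminus\ell(q)}y_p$ and $\widetilde u_q=\prod_{p\in P\setminus\ell(q)}x_p\prod_{p\in\ell(q)}y_p$ for $q\in\mathcal L$; $H_{\mathcal L}=(u_q:q\in\mathcal L)$, $H_{\widetilde{\mathcal L}}=(\widetilde u_q:q\in\mathcal L)$. $N(p)$ (resp. $M(p)$) is the set of lower (resp. upper) neighbors of $p$. For $q\in N(p)$, $p\setminus q$ is the unique element of $\ell(p)\setminus\ell(q)$; $p\setminus U=\{p\setminus q:q\in U\}$; for $s\in M(r)$, $s\setminus r$ is the unique element of $\ell(s)\setminus\ell(r)$ and $T\setminus r=\{s\setminus r:s\in T\}$. Fix a total order $<$ on $P$ extending its partial order and let $\lambda(q;U)=|\{u\in U: u<q\}|$. For $q\in\mathcal L$, $U\subseteq\mathcal L$: $q\wedge U=\{q\wedge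 u:u\in U\}$, $q\vee U=\{q\vee u:u\in U\}$. $\mathbb F$: $F_i$ is free with basis $b(p;U)$, $p\in\mathcal L$, $U\subseteq N(p)$, $|U|=i$, of multidegree $\mathrm{lcm}(u_p,u_q:q\in U)$, augmentation $b(p;\emptyset)\mapsto u_p$, differential $\partial(b(p;U))=\sum_{q\in U}(-1)^{\lambda(p\setminus q;\,p\setminus U)}\bigl(y_{p\setminus q}b(p;U\setminus\{q\})-x_{p\setminus q}b(q;q\wedge(U\setminus\{q\}))\bigr)$; this is a minimal multigraded free resolution of $H_{\mathcal L}$. $\widetilde{\mathbb F}$: $\widetilde F_i$ is free with basis $\widetilde b(r;T)$, $r\in\mathcal L$, $T\subseteq M(r)$, $|T|=i$, of multidegree $\mathrm{lcm}(\widetilde u_r,\widetilde u_s:s\in T)$, augmentation $\widetilde b(r;\emptyset)\mapsto\widetilde u_r$, differential $\widetilde\partial(\widetilde b(r;T))=\sum_{s\in T}(-1)^{\lambda(s\setminus r;\,T\setminus r)}\bigl(y_{s\setminus r}\widetilde b(r;T\setminus\{s\})-x_{s\setminus r}\widetilde b(s;s\vee(T\setminus\{s\}))\bigr)$; this is a minimal multigraded free resolution of $H_{\widetilde{\mathcal L}}$. Let $\sigma:S\to S$ be the involution $x_p\mapsto y_p$, $y_p\mapsto x_p$, let ${}^\sigma S$ be $S$ viewed as an $S$-module via $\sigma$, and $\sigma(\widetilde{\mathbb F})=\widetilde{\mathbb F}\otimes_S{}^\sigma S$, with basis $\sigma(\widetilde b(r;T))=\widetilde b(r;T)\otimes1$;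 it is a minimal free resolution of $\sigma(H_{\widetilde{\mathcal L}})=H_{\mathcal L}$. For $r\in\mathcal L$ and $T\subseteq M(r)$, $r^T$ is the join of all elements of $T$ and $T_r$ is the set of lower neighbors of $r^T$ in the interval $[r,r^T]$. *)

From HB Require Import structures.
From mathcomp Require Import all_boot all_order all_algebra.
From mathcomp Require Import mpoly.
Set Implicit Arguments. Unset Strict Implicit. Unset Printing Implicit Defensive.
Import Order.Theory GRing.Theory.
Local Open Scope order_scope.

Section Defs.
Variables (d : Order.disp_t) (L : finDistrLatticeType d) (K : fieldType).

Definition covered (q p : L) : bool :=
  (q < p) && [forall z : L, ~~ ((q < z) && (z < p))].

Definition lowerN (p : L) : {set L} := [set q | covered q p].
Definition upperN (r : L) : {set L} := [set s | covered r s].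

Definition join_irr (p : L) : bool := #|lowerN p| == 1%N.

Definition PT := {p : L | join_irr p}.
Definition nP := #|{: PT}|.

Definition ell (p : L) : {set L} := [set q | join_irr q && (q <= p)].

(* for q in N(p) (resp. p in M(q)): the unique element of l(p) \ l(q) *)
Definition diffel (p q : L) : L := odflt p [pick z in ell p :\: ell q].

Definition diffset (p : L) (U : {set L}) : {set L} := [set diffel p q | q in U].
Definition diffsetr (T : {set L}) (r : L) : {set L} := [set diffel s r | s in T].

Definition lam (tord : rel L) (q : L) (U : {set L}) : nat :=
  #|[set u in U | tord u q]|.

(* The polynomial ring S = K[x_p, y_p : p in P]: variables x_p are indexed by
   lshift (enum_rank p), variables y_p by rshift (enum_rank p). *)
Definition S := {mpoly K[nP + nP]}.

Definition xv (p : L) : S :=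
  if insub p is Some pp then 'X_(lshift nP (enum_rank (pp : PT))) else 0%R.
Definition yv (p : L) : S :=
  if insub p is Some pp then 'X_(rshift nP (enum_rank (pp : PT))) else 0%R.

Definition swapv (i : 'I_(nP + nP)) : 'I_(nP + nP) :=
  match split i with inl j => rshift nP j | inr j => lshift nP j end.
Definition sigma (f : S) : S :=
  comp_mpoly [tuple ('X_(swapv i) : S) | i < nP + nP] f.

(* Ambient free S-module with basis indexed by all pairs (p, U);
   the modules F_i (resp. sigma(F~)_i) are the submodules spanned by the
   basis vectors b(p;U), U \subset N(p), |U| = i
   (resp. b~(r;T), T \subset M(r), |T| = i). *)
Definition key := (L * {set L})%type.
Definition Amb := {ffun key -> S}.

Definition evec (k : key) : Amb := [ffun j => if j == k then 1%R else 0%R].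
Definition scv (a : S) (v : Amb) : Amb := [ffun j => (a * v j)%R].
Definition mapv (f : S -> S) (v : Amb) : Amb := [ffun j => f (v j)].
Definition lin (f : key -> Amb) (v : Amb) : Amb :=
  [ffun j => (\sum_(k : key) v k * f k j)%R].

Definition validF (i : nat) (k : key) : bool :=
  (k.2 \subset lowerN k.1) && (#|k.2| == i).
Definition validG (i : nat) (k : key) : bool :=
  (k.2 \subset upperN k.1) && (#|k.2| == i).

Definition inF (i : nat) (v : Amb) : bool := [forall k, (v k != 0%R) ==> validF i k].
Definition inG (i : nat) (v : Amb) : bool := [forall k, (v k != 0%R) ==> validG i k].

Definition sgn (n : nat) : S := ((-1) ^+ n)%R.

Definition dF_basis (tord : rel L) (k : key) : Amb :=
  let p := k.1 in let U := k.2 in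
  [ffun j => (\sum_(q in U)
     sgn (lam tord (diffel p q) (diffset p U)) *
     (yv (diffel p q) * evec (p, U :\ q) j
      - xv (diffel p q) * evec (q, [set (q `&` u) | u in U :\ q]) j))%R].

Definition dFt_basis (tord : rel L) (k : key) : Amb :=
  let r := k.1 in let T := k.2 in
  [ffun j => (\sum_(s in T)
     sgn (lam tord (diffel s r) (diffsetr T r)) *
     (yv (diffel s r) * evec (r, T :\ s) j
      - xv (diffel s r) * evec (s, [set (s `|` t) | t in T :\ s]) j))%R].

Definition dF (tord : rel L) : Amb -> Amb := lin (dF_basis tord).
(* differential of sigma(F~) = F~ (x)_S ^sigma S: sigma applied to coefficients *)
Definition dsFt (tord : rel L) : Amb -> Amb := lin (fun k => mapv sigma (dFt_basis tord k)).

(* r^T = join of T (together with r, so that r^{emptyset} = r) *)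
Definition rT (r : L) (T : {set L}) : L := \big[Order.join/r]_(s in T) s.
Definition Tr (r : L) (T : {set L}) : {set L} :=
  [set q | (r <= q) && covered q (rT r T)].

Definition pi_basis (k : key) : Amb :=
  scv (sgn #|k.2|) (evec (rT k.1 k.2, Tr k.1 k.2)).
Definition piF : Amb -> Amb := lin pi_basis.

End Defs.

(* For T ⊆ M(r), X ↦ r ∨ ⋁X is a lattice isomorphism from the subsets of T
   onto the interval [r, r^T]: distinct upper covers of r meet in r, so by
   distributivity t ∈ T lies below r ∨ ⋁X only if t ∈ X.  Hence the lower
   covers T_r of r^T in [r, r^T] are the joins r^{T∖s}, |T_r| = |T|, and
   (r, T) ↦ (r^T, T_r) is a bijection from the basis of σ(F~)_i onto that of
   F_i, inverted by the dual construction (p, U) ↦ (⋀U, upper covers of ⋀U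
   below p).  It matches faces: T∖s ↦ q ∧ (T_r∖q) and s ∨ (T∖s) ↦ T_r∖q for
   q = r^{T∖s}, and labels: r^T ∖ q = s ∖ r, since r^T = q ∨ s and s ∧ q = r.
   So π matches the two differentials term by term, the sign (-1)^|T| making
   up for σ exchanging x and y. *)

From HB Require Import structures.
From mathcomp Require Import all_boot all_order all_algebra.
From mathcomp Require Import mpoly.
From mathcomp Require Import ring.
Import Order.Theory GRing.Theory.
Set Implicit Arguments. Unset Strict Implicit. Unset Printing Implicit Defensive.

Section Covers.
Variables (d : Order.disp_t) (L : finDistrLatticeType d).
Local Open Scope order_scope.
Implicit Types (p q r s t x y z : L) (T U X Y : {set L}).

Lemma coveredP q p :
  reflect (q < p /\ forall z, q < z -> z < p -> False) (covered q p).
Proof.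
apply: (iffP andP) => -[qp C]; split=> //.
  by move=> z qz zp; move/forallP/(_ z): C; rewrite qz zp.
by apply/forallP => z; apply/negP => /andP[]; exact: C.
Qed.

Lemma covered_lt q p : covered q p -> q < p.
Proof. by case/coveredP. Qed.

Lemma covered_between r t y : covered r t -> r <= y -> y <= t -> y = r \/ y = t.
Proof.
move=> /coveredP[_ C] ry yt.
have [->|yr] := eqVneq y r; first by left.
have [->|yt'] := eqVneq y t; first by right.
by case: (C y); rewrite lt_neqAle ?ry ?yt ?andbT // eq_sym.
Qed.

Lemma covered_dual x y : covered (L := L^d) x y = covered y x.
Proof.
rewrite /covered ltEdual; congr andb; apply: eq_forallb => z.
by rewrite !ltEdual andbC.
Qed.

Lemma upperN_dual p : upperN (L := L^d) p = lowerN p :> {set L}.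
Proof. by apply/setP => q; rewrite !inE covered_dual. Qed.

Lemma lowerN_dual p : lowerN (L := L^d) p = upperN p :> {set L}.
Proof. by apply/setP => q; rewrite !inE covered_dual. Qed.

Lemma meet_upperN r s t :
  s \in upperN r -> t \in upperN r -> s != t -> s `&` t = r.
Proof.
rewrite !inE => rs rt st.
have [|//|E] := covered_between rs _ (leIl s t); first by rewrite lexI !ltW ?covered_lt.
case/coveredP: rt => _ C; case: (C s); first exact: covered_lt.
by rewrite lt_neqAle st -E leIr.
Qed.

Lemma Tr_sub_lowerN r T : Tr r T \subset lowerN (rT r T).
Proof. by apply/subsetP => q; rewrite !inE => /andP[]. Qed.

Lemma idx_le_rT r X : r <= rT r X.
Proof. by rewrite /rT; elim/big_rec: _ => // s z _ /le_trans; apply; rewrite leUr. Qed.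

Lemma le_rT r X s : s \in X -> s <= rT r X.
Proof. by move=> sX; rewrite /rT (bigD1 s) //= leUl. Qed.

Lemma rT_le r X x : r <= x -> (forall s, s \in X -> s <= x) -> rT r X <= x.
Proof.
by move=> rx Xx; rewrite /rT; elim/big_rec: _ => // s z /Xx sx zx; rewrite leUx sx.
Qed.

Lemma rT_mono r X Y : X \subset Y -> rT r X <= rT r Y.
Proof.
by move=> XY; apply: rT_le => [|s /(subsetP XY)]; [apply: idx_le_rT | apply: le_rT].
Qed.

Lemma rT_set0 r : rT r set0 = r.
Proof. by rewrite /rT big_set0. Qed.

Lemma meet_rT_le x y r X :
  x `&` r <= y -> (forall s, s \in X -> x `&` s <= y) -> x `&` rT r X <= y.
Proof.
move=> xr xX; rewrite /rT; elim/big_rec: _ => // s z /xX xs xz.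
by rewrite meetUr leUx xs.
Qed.

End Covers.

Section BooleanInterval.
Variables (d : Order.disp_t) (L : finDistrLatticeType d).
Local Open Scope order_scope.
Implicit Types (q s t x : L) (X Y Z : {set L}).
Variables (r : L) (T : {set L}).
Hypothesis HT : T \subset upperN r.

Lemma covered_upper t : t \in T -> covered r t.
Proof. by move/(subsetP HT); rewrite inE. Qed.

Lemma le_rTE Y t : Y \subset T -> t \in T -> (t <= rT r Y) = (t \in Y).
Proof.
move=> YT tT; apply/idP/idP => [tle|]; last exact: le_rT.
apply: contraT => tY.
have tr : t `&` rT r Y <= r.
  apply: meet_rT_le => [|s sY]; first exact: leIr.
  have sT := subsetP YT s sY.
  rewrite (@meet_upperN _ _ r) ?(subsetP HT _ tT) ?(subsetP HT _ sT) //.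
  by apply: contraNneq tY => ->.
by move: tr; rewrite (meet_l tle) (lt_geF (covered_lt (covered_upper tT))).
Qed.

Lemma le_rT2 X Y :
  X \subset T -> Y \subset T -> (rT r X <= rT r Y) = (X \subset Y).
Proof.
move=> XT YT; apply/idP/idP => [XY|/rT_mono//].
apply/subsetP => t tX; rewrite -(le_rTE YT (subsetP XT t tX)).
exact: le_trans (le_rT r tX) XY.
Qed.

Lemma rT_inj X Y : X \subset T -> Y \subset T -> rT r X = rT r Y -> X = Y.
Proof.
move=> XT YT E; apply/eqP.
by rewrite eqEsubset -(le_rT2 XT YT) -(le_rT2 YT XT) E lexx.
Qed.

Lemma rT_surj x :
  r <= x -> x <= rT r T -> exists2 Z : {set L}, Z \subset T & x = rT r Z.
Proof.
move=> rx xT; exists [set t in T | t <= x].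
  by apply/subsetP => t; rewrite inE => /andP[].
apply/le_anti/andP; split; last by apply: rT_le => // t; rewrite inE => /andP[].
rewrite -{1}(meet_l xT); apply: meet_rT_le => [|s sT].
  exact: le_trans (leIr _ _) (idx_le_rT _ _).
have [|->|xs] := covered_between (covered_upper sT) _ (leIr s x).
- by rewrite lexI rx ltW ?covered_lt ?covered_upper.
- exact: idx_le_rT.
- by rewrite xs le_rT // inE sT -xs leIl.
Qed.

Lemma meet_rT X Y :
  X \subset T -> Y \subset T -> rT r X `&` rT r Y = rT r (X :&: Y).
Proof.
move=> XT YT; have XYT : X :&: Y \subset T by rewrite subIset ?XT.
have rXY : r <= rT r X `&` rT r Y by rewrite lexI !idx_le_rT.
have [Z ZT E] := rT_surj rXY (le_trans (leIl _ _) (rT_mono r XT)).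
apply/le_anti/andP; split; last by rewrite lexI !rT_mono ?subsetIl ?subsetIr.
by rewrite E le_rT2 // subsetI -(le_rT2 ZT XT) -(le_rT2 ZT YT) -E leIl leIr.
Qed.

Lemma covered_rT_setD1 X s :
  X \subset T -> s \in X -> covered (rT r (X :\ s)) (rT r X).
Proof.
move=> XT sX; have XsT : X :\ s \subset T := subset_trans (subD1set X s) XT.
apply/coveredP; split.
  by rewrite lt_leAnge !le_rT2 // subD1set subsetD1 subxx sX.
move=> z Xsz zX; have rz : r <= z := le_trans (idx_le_rT r _) (ltW Xsz).
have [Z ZT zE] := rT_surj rz (le_trans (ltW zX) (rT_mono r XT)).
move: Xsz zX; rewrite zE !lt_leAnge !le_rT2 // => /andP[XsZ nZXs] /andP[ZX nXZ].
have sZ : s \in Z by apply: contraNT nZXs => sZ; rewrite subsetD1 ZX sZ.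
by case/negP: nXZ; rewrite -(setD1K sX) subUset sub1set sZ XsZ.
Qed.

Lemma TrE : Tr r T = [set rT r (T :\ s) | s in T].
Proof.
apply/setP => q; rewrite inE; apply/andP/imsetP => [[rq qT]|[s sT ->]]; last first.
  by rewrite idx_le_rT covered_rT_setD1.
have [Z ZT qE] := rT_surj rq (ltW (covered_lt qT)).
have [s sT sZ] : exists2 s, s \in T & s \notin Z.
  apply/subsetPn/negP => TZ.
  by move: (covered_lt qT); rewrite qE lt_leAnge (rT_mono r TZ) andbF.
exists s => //.
have qTs : q <= rT r (T :\ s) by rewrite qE le_rT2 ?subD1set // subsetD1 ZT sZ.
have [->//|E] := covered_between qT qTs (rT_mono r (subD1set T s)).
by have := covered_lt (covered_rT_setD1 (subxx T) sT); rewrite E ltxx.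
Qed.

Lemma rT_setD1_inj : {in T &, injective (fun s => rT r (T :\ s))}.
Proof.
move=> s t sT tT /rT_inj E; move/setP/(_ s): (E (subD1set _ _) (subD1set _ _)).
by rewrite !inE eqxx sT andbT; case: eqP.
Qed.

Lemma card_Tr : #|Tr r T| = #|T|.
Proof. by rewrite TrE card_in_imset //; exact: rT_setD1_inj. Qed.

Lemma rT_dual_Tr : rT (L := L^d) (rT r T) (Tr r T) = r.
Proof.
pose m : L := rT (L := L^d) (rT r T) (Tr r T); rewrite -/m.
have rm : r <= m.
  rewrite -leEdual; apply: rT_le; first by rewrite leEdual idx_le_rT.
  by move=> u; rewrite inE leEdual => /andP[].
have mT : m <= rT r T by rewrite -leEdual; apply: idx_le_rT.
have [Z ZT mE] := rT_surj rm mT.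
suff Z0 : Z = set0 by rewrite mE Z0 rT_set0.
apply/setP => t; rewrite inE; apply/negbTE/negP => tZ.
have tT := subsetP ZT t tZ.
have : m <= rT r (T :\ t).
  by rewrite -leEdual; apply: le_rT; rewrite TrE; apply: imset_f.
rewrite mE le_rT2 ?subD1set // => /subsetP/(_ t tZ).
by rewrite !inE eqxx.
Qed.

Lemma Tr_dual_Tr : Tr (L := L^d) (rT r T) (Tr r T) = T.
Proof.
apply/setP => q; rewrite /Tr rT_dual_Tr !inE leEdual covered_dual.
apply/andP/idP => [[qT rq]|tT]; last first.
  by rewrite le_rT ?covered_upper.
have [Z ZT qE] := rT_surj (ltW (covered_lt rq)) qT.
have [t tZ] : exists t, t \in Z.
  apply/set0Pn; apply: contraTneq (covered_lt rq) => Z0.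
  by rewrite qE Z0 rT_set0 ltxx.
have tq : t <= q by rewrite qE le_rT.
have tT := subsetP ZT t tZ.
have [tr|<-//] := covered_between rq (ltW (covered_lt (covered_upper tT))) tq.
by have := covered_lt (covered_upper tT); rewrite tr ltxx.
Qed.

End BooleanInterval.

(* [cover_key (r, T)] = (r^T, T_r).  Computed in the dual lattice it sends
   (p, U) to (⋀U, upper covers of ⋀U below p), its inverse. *)
Definition cover_key d (L : finDistrLatticeType d) (k : key L) : key L :=
  (rT k.1 k.2, Tr k.1 k.2).

Section CoverKey.
Variables (d : Order.disp_t) (L : finDistrLatticeType d).
Implicit Types (i : nat) (k : key L).

Lemma cover_key_valid i k : validG i k -> validF i (cover_key k).
Proof.
case: k => r T; rewrite /validG /validF /= => /andP[HT /eqP <-].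
by rewrite Tr_sub_lowerN (card_Tr HT) eqxx.
Qed.

Lemma cover_keyK i k : validG i k -> cover_key (L := L^d) (cover_key k) = k.
Proof.
case: k => r T; rewrite /validG /= => /andP[HT _].
by rewrite /cover_key /= rT_dual_Tr ?Tr_dual_Tr.
Qed.

End CoverKey.

Section CoverKeyDual.
Variables (d : Order.disp_t) (L : finDistrLatticeType d).
Implicit Types (i : nat) (k : key L).

Lemma validF_dual i k : validF (L := L^d) i k = validG i k.
Proof. by rewrite /validF /validG lowerN_dual. Qed.

Lemma validG_dual i k : validG (L := L^d) i k = validF i k.
Proof. by rewrite /validF /validG upperN_dual. Qed.

Lemma cover_key_dual_valid i k :
  validF i k -> validG i (cover_key (L := L^d) k : key L).
Proof.
move=> kF; rewrite -validF_dual; apply: (@cover_key_valid _ L^d).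
by rewrite validG_dual.
Qed.

Lemma cover_key_dualK i k :
  validF i k -> cover_key (cover_key (L := L^d) k : key L) = k.
Proof. by rewrite -validG_dual; apply: (@cover_keyK _ L^d). Qed.

End CoverKeyDual.

Section JoinIrreducible.
Variables (d : Order.disp_t) (L : finDistrLatticeType d).
Local Open Scope order_scope.
Implicit Types (a c r s x y z : L).

Let nbelow x := #|[set w | w < x]|.

Lemma nbelow_lt x y : x < y -> (nbelow x < nbelow y)%N.
Proof.
move=> xy; apply: proper_card; apply/properP; split.
  by apply/subsetP => w; rewrite !inE => /lt_trans; apply.
by exists x; rewrite !inE ?xy ?ltxx.
Qed.

Lemma exists_cover a z : a < z -> exists2 c, covered c z & a <= c.
Proof.
move=> az; have Pa : (a <= a) && (a < z) by rewrite lexx az.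
have [c /andP[ac cz] cmax] := arg_maxnP nbelow (P := fun c => (a <= c) && (c < z)) Pa.
exists c => //; apply/coveredP; split=> // w cw wz.
have := cmax w; rewrite (le_trans ac (ltW cw)) wz => /(_ isT).
by rewrite /geq /= leqNgt (nbelow_lt cw).
Qed.

Lemma join_irr_join z x y : join_irr z -> x `|` y = z -> x = z \/ y = z.
Proof.
move=> /cards1P[c Nz] E.
have cz : covered c z by move: (set11 c); rewrite -Nz inE.
have below w : w < z -> w <= c.
  move=> /exists_cover[c' c'z wc']; suff <- : c' = c by [].
  by apply/set1P; rewrite -Nz inE.
have [->|xz] := eqVneq x z; first by left.
have [->|yz] := eqVneq y z; first by right.
have : z <= c by rewrite -E leUx !below // lt_neqAle ?xz ?yz -E ?leUl ?leUr.
by rewrite lt_geF ?covered_lt.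
Qed.

Lemma ell_join_setD a s : ell (a `|` s) :\: ell a = ell s :\: ell (s `&` a).
Proof.
apply/setP => z; rewrite !inE; case jz: (join_irr z) => //=.
apply/andP/andP => [[za zas]|[zsa zs]].
  have := meetUr z a s; rewrite (meet_l zas) => /esym/(join_irr_join jz)[E|E].
    by move: za; rewrite -E leIr.
  have zs : z <= s by rewrite -E leIr.
  by split=> //; apply: contra za => /le_trans; apply; exact: leIr.
split; last exact: le_trans zs (leUr _ _).
by apply: contra zsa => za; rewrite lexI zs.
Qed.

Lemma ell_covered_neq0 r s : covered r s -> exists z, z \in ell s :\: ell r.
Proof.
move=> rs; have Ps : (s <= s) && ~~ (s <= r) by rewrite lexx lt_geF ?covered_lt.
have [z /andP[zs zr] zmin] :=
  arg_minnP nbelow (P := fun y => (y <= s) && ~~ (y <= r)) Ps.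
(* z is minimal with z ≤ s, z ≰ r: its lower covers lie below r, hence
   their join is not z and z has only one of them. *)
have below w : w < z -> w <= r.
  move=> wz; apply: contraT => wr.
  have := zmin w; rewrite (le_trans (ltW wz) zs) wr => /(_ isT).
  by rewrite leqNgt (nbelow_lt wz).
exists z; rewrite !inE zs (negbTE zr) andbF andbT /=.
have [|c cz _] := exists_cover (a := z `&` r) (z := z).
  by rewrite lt_neqAle leIl andbT; apply: contraNneq zr => <-; rewrite leIr.
apply/cards1P; exists c; apply/setP => c'; rewrite !inE; apply/idP/eqP => [c'z|->//].
have Jz : c `|` c' <= z by rewrite leUx !ltW ?covered_lt.
have JnZ : c `|` c' != z.
  by apply: contraNneq zr => <-; rewrite leUx !below ?covered_lt.
have [Jc|/eqP] := covered_between cz (leUl c c') Jz; last by rewrite (negbTE JnZ).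
have [Jc'|/eqP] := covered_between c'z (leUr c' c) Jz; last by rewrite (negbTE JnZ).
by rewrite -Jc Jc'.
Qed.

End JoinIrreducible.

Section Faces.
Variables (d : Order.disp_t) (L : finDistrLatticeType d).
Local Open Scope order_scope.
Implicit Types (q s t : L).
Variables (r : L) (T : {set L}).
Hypothesis HT : T \subset upperN r.

Let HTs s : T :\ s \subset upperN r := subset_trans (subD1set T s) HT.

Lemma Tr_setD1_rT s : s \in T ->
  Tr r T :\ rT r (T :\ s) = [set rT r (T :\ t) | t in T :\ s].
Proof.
move=> sT; apply/setP => q; rewrite in_setD1 (TrE HT).
apply/andP/imsetP => [[qs /imsetP[t tT qE]]|[t]].
  exists t => //; rewrite !inE tT andbT.
  by apply: contraNneq qs => ts; rewrite qE ts.
rewrite !inE => /andP[ts tT] ->; split; last exact: imset_f.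
by apply: contraNneq ts => /(rT_setD1_inj HT tT sT) ->.
Qed.

Lemma Tr_setD1 s : s \in T ->
  Tr r (T :\ s) = [set rT r (T :\ s) `&` u | u in Tr r T :\ rT r (T :\ s)].
Proof.
move=> sT; rewrite (Tr_setD1_rT sT) (TrE (HTs s)) -imset_comp.
apply: eq_in_imset => t; rewrite !inE => /andP[ts tT] /=.
rewrite (meet_rT HT) ?subD1set //; congr rT; apply/setP => x; rewrite !inE.
by case: (x \in T); case: (x == s); case: (x == t).
Qed.

Lemma rT_join_setD1 s : s \in T -> rT s [set s `|` t | t in T :\ s] = rT r T.
Proof.
move=> sT; apply/le_anti/andP; split.
  apply: rT_le; first exact: le_rT.
  by move=> _ /imsetP[t /setD1P[_ tT] ->]; rewrite leUx !le_rT.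
have rs := ltW (covered_lt (covered_upper HT sT)).
apply: rT_le => [|t tT]; first exact: le_trans rs (idx_le_rT _ _).
have [->|ts] := eqVneq t s; first exact: idx_le_rT.
by apply: le_trans (leUr t s) (le_rT _ _); apply: imset_f; rewrite !inE ts.
Qed.

Lemma Tr_join_setD1 s : s \in T ->
  Tr s [set s `|` t | t in T :\ s] = Tr r T :\ rT r (T :\ s).
Proof.
move=> sT; apply/setP => q; rewrite in_setD1 /Tr !inE (rT_join_setD1 sT).
case qc: (covered q (rT r T)); rewrite ?andbF // !andbT.
apply/idP/andP => [sq|[qs rq]].
  split; last exact: le_trans (ltW (covered_lt (covered_upper HT sT))) sq.
  by apply: contraTneq sq => ->; rewrite (le_rTE HT) ?subD1set // !inE eqxx.
have /imsetP[u uT qE] : q \in [set rT r (T :\ u) | u in T].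
  by rewrite -(TrE HT) inE rq qc.
rewrite qE (le_rTE HT) ?subD1set // !inE sT andbT.
by apply: contraNneq qs => su; rewrite qE su.
Qed.

Lemma card_join_setD1 s :
  s \in T -> #|[set s `|` t | t in T :\ s]| = #|T :\ s|.
Proof.
move=> sT; apply: card_in_imset => t t'.
rewrite !inE => /andP[ts tT] /andP[t's t'T] E.
apply/eqP; apply: contraTT (covered_lt (covered_upper HT tT)) => tt'.
have : t <= s `|` t' by rewrite -E leUr.
move/meet_l; rewrite meetUr (@meet_upperN _ _ r t s) ?(subsetP HT) //.
by rewrite (@meet_upperN _ _ r t t') ?(subsetP HT) // joinxx => ->; rewrite ltxx.
Qed.

Lemma rT_setD1_join s : s \in T -> rT r T = rT r (T :\ s) `|` s.
Proof.
move=> sT; apply/le_anti/andP; split; last by rewrite leUx rT_mono ?subD1set ?le_rT.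
apply: rT_le => [|t tT]; first exact: le_trans (idx_le_rT r _) (leUl _ _).
have [->|ts] := eqVneq t s; first exact: leUr.
by apply: le_trans (leUl _ _); apply: le_rT; rewrite !inE ts.
Qed.

Lemma meet_rT_setD1 s : s \in T -> s `&` rT r (T :\ s) = r.
Proof.
move=> sT; have rs := covered_upper HT sT.
have [|//|E] := covered_between rs _ (leIl s (rT r (T :\ s))).
  by rewrite lexI ltW ?covered_lt ?idx_le_rT.
have : s <= rT r (T :\ s) by rewrite -[s in s <= _]E leIr.
by rewrite (le_rTE HT) ?subD1set // !inE eqxx.
Qed.

Lemma diffel_rT_setD1 s :
  s \in T -> diffel (rT r T) (rT r (T :\ s)) = diffel s r.
Proof.
move=> sT; rewrite /diffel (rT_setD1_join sT) ell_join_setD (meet_rT_setD1 sT).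
case: pickP => // none; have [z] := ell_covered_neq0 (covered_upper HT sT).
by rewrite none.
Qed.

End Faces.

Section Sigma.
Variables (d : Order.disp_t) (L : finDistrLatticeType d) (K : fieldType).
Local Open Scope ring_scope.

Lemma sigmaM (a b : S L K) : sigma (a * b) = sigma a * sigma b.
Proof. by rewrite /sigma rmorphM. Qed.

Lemma sigmaB (a b : S L K) : sigma (a - b) = sigma a - sigma b.
Proof. by rewrite /sigma rmorphB. Qed.

Lemma sigma_sum (I : finType) (P : pred I) (F : I -> S L K) :
  sigma (\sum_(i | P i) F i) = \sum_(i | P i) sigma (F i).
Proof. by rewrite /sigma rmorph_sum. Qed.

Lemma sigmaX i : sigma ('X_i : S L K) = 'X_(swapv i).
Proof. by rewrite /sigma comp_mpolyXU -tnth_nth tnth_mktuple. Qed.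

Lemma sigma_xv (z : L) : sigma (xv K z) = yv K z.
Proof.
rewrite /xv /yv; case: insub => [p|] /=; last by rewrite /sigma rmorph0.
by rewrite sigmaX /swapv (unsplitK (inl _ : 'I_(nP L) + 'I_(nP L))).
Qed.

Lemma sigma_yv (z : L) : sigma (yv K z) = xv K z.
Proof.
rewrite /xv /yv; case: insub => [p|] /=; last by rewrite /sigma rmorph0.
by rewrite sigmaX /swapv (unsplitK (inr _ : 'I_(nP L) + 'I_(nP L))).
Qed.

Lemma sigma_sgn n : sigma (sgn L K n) = sgn L K n.
Proof. by rewrite /sigma rmorphXn rmorphN1. Qed.

Lemma sigma_evec (a j : key L) : sigma (evec K a j) = evec K a j.
Proof. by rewrite /sigma ffunE; case: eqP; rewrite ?rmorph1 ?rmorph0. Qed.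

End Sigma.

Definition supported d (L : finDistrLatticeType d) (K : fieldType)
    (P : pred (key L)) (v : Amb L K) : bool :=
  [forall k, (v k != 0%R) ==> P k].

Section SignedBasisMap.
Variables (d : Order.disp_t) (L : finDistrLatticeType d) (K : fieldType).
Local Open Scope ring_scope.
Local Notation key := (key L).
Local Notation Amb := (Amb L K).
Implicit Types (P : pred key) (v w : Amb) (j k : key).

Lemma supported_eq0 P v k : supported P v -> ~~ P k -> v k = 0.
Proof. by move=> /forallP/(_ k)/implyP Pv; apply: contraNeq. Qed.

Lemma sum_evec a (F : key -> S L K) : \sum_k evec K a k * F k = F a.
Proof.
rewrite (bigD1 a) //= ffunE eqxx mul1r big1 ?addr0 // => k /negbTE ka.
by rewrite ffunE ka mul0r.
Qed.

Lemma lin_comp (f g : key -> Amb) w j :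
  lin f (lin g w) j = \sum_k w k * \sum_k' g k k' * f k' j.
Proof.
rewrite ffunE; under eq_bigr do rewrite ffunE big_distrl /=.
rewrite exchange_big; apply: eq_bigr => k _; rewrite big_distrr.
by apply: eq_bigr => k' _; rewrite /= mulrA.
Qed.

Lemma lin_comp_supported P (f1 g1 f2 g2 : key -> Amb) w :
    (forall k j, P k -> \sum_k' g1 k k' * f1 k' j = \sum_k' g2 k k' * f2 k' j) ->
  supported P w -> lin f1 (lin g1 w) = lin f2 (lin g2 w).
Proof.
move=> fg Pw; apply/ffunP => j; rewrite !lin_comp; apply: eq_bigr => k _.
have [-> | /(implyP (forallP Pw k)) Pk] := eqVneq (w k) 0; first by rewrite !mul0r.
by rewrite fg.
Qed.

Variables (f : key -> key) (c : key -> S L K).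
Local Notation phi := (lin (fun k => scv (c k) (evec K (f k)))).

Lemma lin_scv_evecE w j : phi w j = \sum_(k | f k == j) w k * c k.
Proof.
rewrite ffunE [RHS]big_mkcond; apply: eq_bigr => k _; rewrite !ffunE eq_sym.
by case: eqP; rewrite ?mulr1 ?mulr0.
Qed.

Variables (A B : pred key) (g : key -> key).
Hypotheses (fAB : forall k, A k -> B (f k)) (gBA : forall k, B k -> A (g k)).
Hypotheses (gfK : forall k, A k -> g (f k) = k) (fgK : forall k, B k -> f (g k) = k).
Hypothesis c_invol : forall k, c k * c k = 1.

Lemma lin_scv_evec_f w k : supported A w -> A k -> phi w (f k) = w k * c k.
Proof.
move=> Aw Ak; rewrite lin_scv_evecE (bigD1 k) //= big1 ?addr0 //.
move=> k' /andP[/eqP fk' k'k].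
have [-> | /(implyP (forallP Aw k')) Ak'] := eqVneq (w k') 0; first by rewrite mul0r.
by move: k'k; rewrite -(gfK Ak') fk' gfK ?eqxx.
Qed.

Lemma lin_scv_evec_out w j : supported A w -> ~~ B j -> phi w j = 0.
Proof.
move=> Aw Bj; rewrite lin_scv_evecE big1 // => k /eqP fkj.
by rewrite (supported_eq0 Aw) ?mul0r //; apply: contra Bj => /fAB; rewrite fkj.
Qed.

Lemma supported_lin_scv_evec w : supported A w -> supported B (phi w).
Proof.
move=> Aw; apply/forallP => j; apply/implyP => nz.
by apply: contraNT nz => /(lin_scv_evec_out Aw) ->.
Qed.

Lemma lin_scv_evec_bij v : supported B v -> exists! w, supported A w /\ phi w = v.
Proof.
move=> Bv; pose w : Amb := [ffun k => if A k then v (f k) * c k else 0].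
have Aw : supported A w.
  by apply/forallP => k; rewrite ffunE; case: (A k); rewrite ?implybT ?eqxx.
exists w; split.
  split=> //; apply/ffunP => j; have [Bj|Bj] := boolP (B j).
    by rewrite -(fgK Bj) lin_scv_evec_f ?gBA // ffunE gBA // -mulrA c_invol mulr1.
  by rewrite lin_scv_evec_out // (supported_eq0 Bv).
move=> w' [Aw' phiw']; apply/ffunP => k; rewrite ffunE -phiw'.
have [Ak|Ak] := boolP (A k); last by rewrite (supported_eq0 Aw').
by rewrite lin_scv_evec_f // -mulrA c_invol mulr1.
Qed.

End SignedBasisMap.

Section Differentials.
Variables (d : Order.disp_t) (L : finDistrLatticeType d) (K : fieldType) (tord : rel L).
Local Open Scope ring_scope.
Local Notation key := (key L).
Local Notation S := (S L K).
Local Notation sgn := (sgn L K).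
Implicit Types (r s : L) (T : {set L}) (j k : key).

Lemma sgnS n : sgn n.+1 = - sgn n.
Proof. by rewrite /sgn exprS mulN1r. Qed.

Lemma sgn_invol n : sgn n * sgn n = 1.
Proof. by rewrite /sgn -exprMn mulrNN mulr1 expr1n. Qed.

Lemma sum_evec_comb (c a b : S) e1 e2 (F : key -> S) :
  \sum_k c * (a * evec K e1 k - b * evec K e2 k) * F k = c * (a * F e1 - b * F e2).
Proof.
under eq_bigr do rewrite mulrBr mulrBl !mulrA -![c * _ * _ * _]mulrA.
by rewrite sumrB -!big_distrr /= !sum_evec mulrBr !mulrA.
Qed.

Lemma sum_pi_basis k (F : key -> S) :
  \sum_k' pi_basis K k k' * F k' = sgn #|k.2| * F (cover_key k).
Proof. by under eq_bigr do rewrite ffunE -mulrA; rewrite -big_distrr sum_evec. Qed.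

Lemma sigma_dFt_basis r T :
  mapv (@sigma _ L K) (dFt_basis K tord (r, T)) =
  [ffun j => \sum_(s in T) sgn (lam tord (diffel s r) (diffsetr T r)) *
     (xv K (diffel s r) * evec K (r, T :\ s) j
      - yv K (diffel s r) * evec K (s, [set (s `|` t)%O | t in T :\ s]) j)].
Proof.
apply/ffunP => j; rewrite !ffunE sigma_sum; apply: eq_bigr => s _.
by rewrite sigmaM sigmaB !sigmaM sigma_sgn sigma_xv sigma_yv !sigma_evec.
Qed.

Section CoverKeyDifferential.
Variables (r : L) (T : {set L}).
Hypothesis HT : T \subset upperN r.

Lemma sum_Tr (F : L -> S) : \sum_(q in Tr r T) F q = \sum_(s in T) F (rT r (T :\ s)).
Proof. by rewrite (TrE HT) big_imset //; apply: rT_setD1_inj. Qed.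

Lemma diffset_Tr : diffset (rT r T) (Tr r T) = diffsetr T r.
Proof.
rewrite /diffset /diffsetr (TrE HT) -imset_comp.
by apply: eq_in_imset => s sT /=; rewrite diffel_rT_setD1.
Qed.

Lemma dF_basis_cover_key j :
  dF_basis K tord (cover_key (r, T)) j =
  \sum_(s in T) sgn (lam tord (diffel s r) (diffsetr T r)) *
    (yv K (diffel s r) * evec K (rT r T, Tr r T :\ rT r (T :\ s)) j
     - xv K (diffel s r) * evec K (rT r (T :\ s), Tr r (T :\ s)) j).
Proof.
rewrite ffunE /= diffset_Tr sum_Tr; apply: eq_bigr => s sT.
by rewrite diffel_rT_setD1 // (Tr_setD1 HT).
Qed.

Lemma pi_dF_basis j :
  \sum_k pi_basis K (r, T) k * dF_basis K tord k j =
  \sum_k mapv (@sigma _ L K) (dFt_basis K tord (r, T)) k * pi_basis K k j.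
Proof.
rewrite sum_pi_basis dF_basis_cover_key sigma_dFt_basis.
under [RHS]eq_bigr do rewrite ffunE big_distrl.
rewrite [RHS]exchange_big big_distrr; apply: eq_bigr => s sT /=.
rewrite sum_evec_comb !ffunE /= (rT_join_setD1 HT) // (Tr_join_setD1 HT) //.
rewrite (card_join_setD1 HT) // (cardsD1 s T) sT add1n sgnS.
ring.
Qed.

End CoverKeyDifferential.
End Differentials.

(* [inF i] and [inG i] unfold to [supported (validF i)] and
   [supported (validG i)], and [piF] to the signed basis map of [cover_key]
   with signs [sgn #|k.2|]. *)
Section CoverKeyIsomorphism.
Variables (d : Order.disp_t) (L : finDistrLatticeType d) (K : fieldType).
Local Open Scope ring_scope.
Implicit Types (i : nat) (v w : Amb L K).

Lemma piF_inF i w : inG i w -> inF i (piF w).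
Proof.
exact: (supported_lin_scv_evec (f := @cover_key _ L) (fun k => sgn L K #|k.2|)
          (@cover_key_valid _ L i)).
Qed.

Lemma piF_bij i v : inF i v -> exists! w, inG i w /\ piF w = v.
Proof.
exact: (lin_scv_evec_bij (f := @cover_key _ L) (c := fun k => sgn L K #|k.2|)
          (g := @cover_key _ L^d) (@cover_key_valid _ L i) (@cover_key_dual_valid _ L i)
          (@cover_keyK _ L i) (@cover_key_dualK _ L i) (fun k => sgn_invol _ _ _)).
Qed.

Lemma piF_dF (tord : rel L) i w :
  inG i w -> dF (K := K) tord (piF w) = piF (dsFt (K := K) tord w).
Proof.
move=> Gw; apply: (lin_comp_supported _ Gw) => -[r T] j /andP[HT _].
exact: pi_dF_basis.
Qed.

End CoverKeyIsomorphism.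

Unset Implicit Arguments.
Theorem proposition3p6 (d : Order.disp_t) (L : finDistrLatticeType d)
  (K : fieldType) (tord : rel L)
  (tord_irr : forall p : L, join_irr p -> ~~ tord p p)
  (tord_trans : forall p q r : L, join_irr p -> join_irr q -> join_irr r ->
     tord p q -> tord q r -> tord p r)
  (tord_total : forall p q : L, join_irr p -> join_irr q -> p != q ->
     tord p q || tord q p)
  (tord_ext : forall p q : L, join_irr p -> join_irr q ->
     (p < q)%O -> tord p q) :
  (* pi maps sigma(F~)_i into F_i *)
  (forall (i : nat) (w : Amb L K), inG i w -> inF i (piF w)) /\
  (* pi : sigma(F~)_i -> F_i is bijective *)
  (forall (i : nat) (v : Amb L K), inF i v ->
     exists! w : Amb L K, inG i w /\ piF w = v) /\
  (* pi commutes with the differentials *)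
  (forall (i : nat) (w : Amb L K), inG i.+1 w ->
     @dF d L K tord (piF w) = piF (@dsFt d L K tord w)).
Proof.
split; [exact: piF_inF | split; [exact: piF_bij | move=> i; exact: piF_dF]].
Qed.
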